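(* For $a\in\mathbb R\setminus\{0,1\}$, let $\mathfrak g_a$ be the $7$-dimensional nilpotent Lie algebra with basis $\{e_1,\dots,e_7\}$ and dual basis $\{e^1,\dots,e^7\}$ satisfying $$de^1=de^2=0,\ de^3=(1-a)e^{12},\ de^4=e^{13},\ de^5=ae^{14}+e^{23},\ de^6=e^{15}+e^{24},\ de^7=e^{16}+e^{25}+e^{34}.$$ Let $\beta=\frac18\sqrt{123\sqrt{41}-767}$. Then the set $\mathbf S$ of signatures of diagonal metrics on $\mathfrak g_a$ satisfying $\operatorname{Ric}=-\frac12\mathrm{id}+\frac12N$ is: for $a<\frac12-\beta$: $\{\emptyset,12457,1345,1357,234,47\}$; for $\frac12-\beta\le a<0$: $\{\emptyset,12457,125,1345,1357,234,237,47\}$; for $0<a<\frac12$: $\{\emptyset,12457,125,146,1345,1357,234,237,34567,47\}$; for $a=\frac12$: $\{\emptyset,12457,125,1357,146,234,237,34567\}$; for $\frac12<a<1$: $\{\emptyset,123467,12457,125,1357,146,234,237,2456,34567\}$; for $1<a\le\frac12+\beta$: $\{\emptyset,123467,125,1357,146,237,2456,34567\}$; for $\frac12+\beta<a$: $\{\emptyset,123467,1357,146,2456,34567\}$.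
   Context: $d$ is the Chevalley–Eilenberg differential and $e^{ij}=e^i\wedge e^j$; the basis $\{e_i\}$ is a nice basis (each $[e_i,e_j]$ is a multiple of some $e_k$ and each $e_i\lrcorner de^j$ a multiple of some $e^k$). The root matrix $M_\Delta$ has one row for each triple $(\{i,j\},k)$ with $[e_i,e_j]$ a nonzero multiple of $e_k$, with $+1$ in position $k$, $-1$ in positions $i,j$, $0$ elsewhere. $N$ is the diagonal Nikolayevsky derivation: the diagonal matrix (in the basis $\{e_i\}$) with diagonal $M_\Delta^Tb+[1]$, where $b$ solves $M_\Delta M_\Delta^Tb=[1]$ and $[1]$ is the all-ones vector. A diagonal metric is $\sum_i g_ie^i\otimes e^i$ with $g_i\neq0$, and $\operatorname{Ric}$ is its Ricci operator. A signature is recorded as the string of indices $i$ with $g_i<0$ (e.g. $1357$ means $g_1,g_3,g_5,g_7<0$ and the other $g_i>0$); $\emptyset$ denotes the positive definite signature. *)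

From HB Require Import structures.
From mathcomp Require Import all_boot all_order all_algebra.
From mathcomp Require Import reals.
Set Implicit Arguments. Unset Strict Implicit. Unset Printing Implicit Defensive.
Import Order.TTheory GRing.Theory Num.Theory.
Local Open Scope ring_scope.

(* [c i j k] is the structure constant: [e_i, e_j] = \sum_k c i j k e_k.      *)
(* [g i] is the diagonal metric  g = \sum_i g_i e^i (x) e^i.                   *)

(* Levi-Civita connection (Koszul formula for left-invariant fields):
   nabla_{e_i} e_j = \sum_k LC i j k e_k, where
   2 g(nabla_X Y, Z) = g([X,Y],Z) - g([Y,Z],X) + g([Z,X],Y). *)
Definition LC (R : realType) (n : nat) (c : 'I_n -> 'I_n -> 'I_n -> R)
  (g : 'I_n -> R) (i j k : 'I_n) : R :=
  (c i j k * g k - c j k i * g i + c k i j * g j) / (2 * g k).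

(* m-th component of R(e_i,e_j)e_l, with
   R(X,Y) = nabla_X nabla_Y - nabla_Y nabla_X - nabla_[X,Y]. *)
Definition curv (R : realType) (n : nat) (c : 'I_n -> 'I_n -> 'I_n -> R)
  (g : 'I_n -> R) (i j l m : 'I_n) : R :=
  \sum_(p < n) LC c g j l p * LC c g i p m
  - \sum_(p < n) LC c g i l p * LC c g j p m
  - \sum_(p < n) c i j p * LC c g p l m.

Definition ric (R : realType) (n : nat) (c : 'I_n -> 'I_n -> 'I_n -> R)
  (g : 'I_n -> R) (j l : 'I_n) : R :=
  \sum_(i < n) curv c g i j l i.

(* Ricci operator: g(Ric X, Y) = ric(X, Y); matrix acting on column vectors,
   column j = coordinates of Ric e_j. *)
Definition ricci_op (R : realType) (n : nat) (c : 'I_n -> 'I_n -> 'I_n -> R)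
  (g : 'I_n -> R) : 'M[R]_n :=
  \matrix_(l, j) (ric c g j l / g l).

Definition root_triples (R : realType) (n : nat)
  (c : 'I_n -> 'I_n -> 'I_n -> R) : seq ('I_n * 'I_n * 'I_n) :=
  [seq t : 'I_n * 'I_n * 'I_n <- [seq (ij, k) | ij <- [seq (i, j) | i <- enum 'I_n, j <- enum 'I_n], k <- enum 'I_n]
     | (t.1.1 < t.1.2)%N && (c t.1.1 t.1.2 t.2 != 0)].

Definition root_matrix (R : realType) (n : nat)
  (c : 'I_n -> 'I_n -> 'I_n -> R) : 'M[R]_(size (root_triples c), n) :=
  \matrix_(r < size (root_triples c), l < n)
    (let t := tnth (in_tuple (root_triples c)) r in
     (l == t.2)%:R - (l == t.1.1)%:R - (l == t.1.2)%:R).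

(* diagonal of N, as a row vector: (M^T b + [1])^T where M M^T b = [1];
   in row form b^T = [1]^T (M M^T)^+ solves b^T (M M^T) = [1]^T. *)
Definition nik_diag (R : realType) (n : nat)
  (c : 'I_n -> 'I_n -> 'I_n -> R) : 'rV[R]_n :=
  const_mx 1 *m pinvmx (root_matrix c *m (root_matrix c)^T) *m root_matrix c
  + const_mx 1.

Definition nikolayevsky (R : realType) (n : nat)
  (c : 'I_n -> 'I_n -> 'I_n -> R) : 'M[R]_n := diag_mx (nik_diag c).

Definition signature (R : realType) (n : nat) (g : 'I_n -> R) : {set 'I_n} :=
  [set i | g i < 0].

Definition inS (R : realType) (n : nat) (c : 'I_n -> 'I_n -> 'I_n -> R)
  (sigma : {set 'I_n}) : Prop :=
  exists g : 'I_n -> R,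
    (forall i, g i != 0) /\
    ricci_op c g = (- 2^-1) %:M + 2^-1 *: nikolayevsky c /\
    sigma = signature g.

(* coefficient of e^{ij} (i<j, 1-based indices) in de^k *)
Definition dcoef (R : realType) (a : R) (k i j : nat) : R :=
  match k, i, j with
  | 3, 1, 2 => 1 - a
  | 4, 1, 3 => 1
  | 5, 1, 4 => a
  | 5, 2, 3 => 1
  | 6, 1, 5 => 1
  | 6, 2, 4 => 1
  | 7, 1, 6 => 1
  | 7, 2, 5 => 1
  | 7, 3, 4 => 1
  | _, _, _ => 0
  end.

(* structure constants via de^k(e_i,e_j) = - e^k([e_i,e_j]), e^{ij}(e_i,e_j)=1;
   the basis vector e_{m+1} of the paper is the ordinal m : 'I_7. *)
Definition ga (R : realType) (a : R) (i j k : 'I_7) : R :=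
  if (i < j)%N then - dcoef a k.+1 i.+1 j.+1
  else if (j < i)%N then dcoef a k.+1 j.+1 i.+1
  else 0.

(* signature written as in the paper, from the list of 1-based indices *)
Definition sg (s : seq nat) : {set 'I_7} := [set i : 'I_7 | (i.+1 \in s)%N].

Definition beta (R : realType) : R :=
  Num.sqrt (123 * Num.sqrt 41 - 767) / 8.
Arguments sg s%_nat_scope.

(* In the nice basis the Ricci operator of a diagonal metric g is diagonal, with entries
   linear in the nine quantities c^2 g_k / (g_i g_j), one per bracket [e_i, e_j] = c e_k,
   and the Nikolayevsky derivation is N = diag(k/5).  Thus Ric = -1/2 id + 1/2 N is a
   linear system in these quantities, which in addition satisfy three multiplicative
   relations.  Every solution is parametrised by (s, q, x3), the quantities of [e1,e2],
   [e1,e6] and [e1,e4] being (1-a) s, q and x3 = +-a s.  For x3 = a s there are exactly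
   two solutions; for x3 = -a s, q is a root of the cubic
   (2/5 - q)^2 (q + 3/5) = (1 - 2a)^2 q (q + 1/5)^2 and (1 - 2a) s = 2/5 - q.  This cubic
   always has a root in (0, 2/5), has one in (2/5, oo) iff (1 - 2a)^2 < 1, and one below
   -3/5 iff (1 - 2a)^2 <= 4 beta^2, the value at which it acquires a double root.  Every
   solution is realised by metrics with g_1 of either sign, and the signature depends only
   on the signs of g_1, (1-a) s, x3 and q. *)

From HB Require Import structures.
From mathcomp Require Import all_boot all_order all_algebra.
From mathcomp Require Import reals.
From mathcomp Require Import ring lra polyrcf.
From Stdlib Require Import FunctionalExtensionality.
Set Implicit Arguments. Unset Strict Implicit. Unset Printing Implicit Defensive.
Import Order.TTheory GRing.Theory Num.Theory.
Local Open Scope ring_scope.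

Definition diag_metric (R : nmodType) (g1 g2 g3 g4 g5 g6 g7 : R) : 'I_7 -> R :=
  fun i => nth 0 [:: g1; g2; g3; g4; g5; g6; g7] i.

(* [X1, ..., X9] stand for c^2 g_k / (g_i g_j) for the brackets [e1,e2], [e1,e3], [e1,e4],
   [e2,e3], [e1,e5], [e2,e4], [e1,e6], [e2,e5], [e3,e4] of g_a, c its structure constant. *)
Record brackets (R : Type) :=
  Brackets { X1 : R; X2 : R; X3 : R; X4 : R; X5 : R; X6 : R; X7 : R; X8 : R; X9 : R }.

Definition brackets_of (R : fieldType) (a g1 g2 g3 g4 g5 g6 g7 : R) : brackets R :=
  Brackets ((1 - a) ^+ 2 * g3 / (g1 * g2)) (g4 / (g1 * g3)) (a ^+ 2 * g5 / (g1 * g4))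
    (g5 / (g2 * g3)) (g6 / (g1 * g5)) (g6 / (g2 * g4)) (g7 / (g1 * g6))
    (g7 / (g2 * g5)) (g7 / (g3 * g4)).

Definition ricci_diag (R : fieldType) (x : brackets R) : 'rV[R]_7 :=
  \row_k (nth 0 [:: - (X1 x + X2 x + X3 x + X5 x + X7 x); - (X1 x + X4 x + X6 x + X8 x);
                   X1 x - X2 x - X4 x - X9 x; X2 x - X3 x - X6 x - X9 x;
                   X3 x + X4 x - X5 x - X8 x; X5 x + X6 x - X7 x; X7 x + X8 x + X9 x] k / 2).

Section Ricci.
Variable R : realType.

Definition ga_tab (a : R) (i j k : nat) : R :=
  match i, j, k with
  | 0, 1, 2 => a - 1 | 1, 0, 2 => 1 - a
  | 0, 2, 3 => -1 | 2, 0, 3 => 1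
  | 0, 3, 4 => - a | 3, 0, 4 => a
  | 1, 2, 4 => -1 | 2, 1, 4 => 1
  | 0, 4, 5 => -1 | 4, 0, 5 => 1
  | 1, 3, 5 => -1 | 3, 1, 5 => 1
  | 0, 5, 6 => -1 | 5, 0, 6 => 1
  | 1, 4, 6 => -1 | 4, 1, 6 => 1
  | 2, 3, 6 => -1 | 3, 2, 6 => 1
  | _, _, _ => 0
  end.

Definition lc_tab (a g1 g2 g3 g4 g5 g6 g7 : R) (i j k : nat) : R :=
  match i, j, k with
  | 0, 1, 2 => (a - 1) / 2          | 0, 2, 1 => (1 - a) * g3 / (2 * g2)
  | 0, 2, 3 => - 1 / 2             | 0, 3, 2 => g4 / (2 * g3)
  | 0, 3, 4 => - a / 2             | 0, 4, 3 => a * g5 / (2 * g4)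
  | 0, 4, 5 => - 1 / 2             | 0, 5, 4 => g6 / (2 * g5)
  | 0, 5, 6 => - 1 / 2             | 0, 6, 5 => g7 / (2 * g6)
  | 1, 0, 2 => (1 - a) / 2          | 1, 2, 0 => (a - 1) * g3 / (2 * g1)
  | 1, 2, 4 => - 1 / 2             | 1, 3, 5 => - 1 / 2
  | 1, 4, 2 => g5 / (2 * g3)        | 1, 4, 6 => - 1 / 2
  | 1, 5, 3 => g6 / (2 * g4)        | 1, 6, 4 => g7 / (2 * g5)
  | 2, 0, 1 => (1 - a) * g3 / (2 * g2) | 2, 0, 3 => 1 / 2
  | 2, 1, 0 => (a - 1) * g3 / (2 * g1) | 2, 1, 4 => 1 / 2
  | 2, 3, 0 => - g4 / (2 * g1)      | 2, 3, 6 => - 1 / 2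
  | 2, 4, 1 => - g5 / (2 * g2)      | 2, 6, 3 => g7 / (2 * g4)
  | 3, 0, 2 => g4 / (2 * g3)        | 3, 0, 4 => a / 2
  | 3, 1, 5 => 1 / 2               | 3, 2, 0 => - g4 / (2 * g1)
  | 3, 2, 6 => 1 / 2               | 3, 4, 0 => - a * g5 / (2 * g1)
  | 3, 5, 1 => - g6 / (2 * g2)      | 3, 6, 2 => - g7 / (2 * g3)
  | 4, 0, 3 => a * g5 / (2 * g4)    | 4, 0, 5 => 1 / 2
  | 4, 1, 2 => g5 / (2 * g3)        | 4, 1, 6 => 1 / 2
  | 4, 2, 1 => - g5 / (2 * g2)      | 4, 3, 0 => - a * g5 / (2 * g1)
  | 4, 5, 0 => - g6 / (2 * g1)      | 4, 6, 1 => - g7 / (2 * g2)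
  | 5, 0, 4 => g6 / (2 * g5)        | 5, 0, 6 => 1 / 2
  | 5, 1, 3 => g6 / (2 * g4)        | 5, 3, 1 => - g6 / (2 * g2)
  | 5, 4, 0 => - g6 / (2 * g1)      | 5, 6, 0 => - g7 / (2 * g1)
  | 6, 0, 5 => g7 / (2 * g6)        | 6, 1, 4 => g7 / (2 * g5)
  | 6, 2, 3 => g7 / (2 * g4)        | 6, 3, 2 => - g7 / (2 * g3)
  | 6, 4, 1 => - g7 / (2 * g2)      | 6, 5, 0 => - g7 / (2 * g1)
  | _, _, _ => 0
  end.

Lemma gaE (a : R) : ga a = fun i j k : 'I_7 => ga_tab a i j k.
Proof.
apply: functional_extensionality => i; apply: functional_extensionality => j.
apply: functional_extensionality => k.
case: i => [[|[|[|[|[|[|[|i]]]]]]] ?] //; case: j => [[|[|[|[|[|[|[|j]]]]]]] ?] //;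
case: k => [[|[|[|[|[|[|[|k]]]]]]] ?] //; rewrite /ga /= ?oppr0 ?opprB //.
Qed.

Lemma LC_ga (a g1 g2 g3 g4 g5 g6 g7 : R) :
  g1 != 0 -> g2 != 0 -> g3 != 0 -> g4 != 0 -> g5 != 0 -> g6 != 0 -> g7 != 0 ->
  LC (ga a) (diag_metric g1 g2 g3 g4 g5 g6 g7) =
  fun i j k : 'I_7 => lc_tab a g1 g2 g3 g4 g5 g6 g7 i j k.
Proof.
move=> h1 h2 h3 h4 h5 h6 h7; rewrite gaE.
apply: functional_extensionality => i; apply: functional_extensionality => j.
apply: functional_extensionality => k.
case: i => [[|[|[|[|[|[|[|i]]]]]]] ?] //; case: j => [[|[|[|[|[|[|[|j]]]]]]] ?] //;
case: k => [[|[|[|[|[|[|[|k]]]]]]] ?] //;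
by rewrite /LC /diag_metric /=; field; rewrite ?h1 ?h2 ?h3 ?h4 ?h5 ?h6 ?h7.
Qed.

Lemma sum_ord7 (F : 'I_7 -> R) :
  \sum_(i < 7) F i = F (@Ordinal 7 0 isT) + F (@Ordinal 7 1 isT) + F (@Ordinal 7 2 isT)
    + F (@Ordinal 7 3 isT) + F (@Ordinal 7 4 isT) + F (@Ordinal 7 5 isT) + F (@Ordinal 7 6 isT).
Proof.
rewrite !big_ord_recl big_ord0 addr0 !addrA.
by repeat congr (_ + _); congr F; apply: val_inj.
Qed.

Lemma ricci_op_ga (a g1 g2 g3 g4 g5 g6 g7 : R) :
  g1 != 0 -> g2 != 0 -> g3 != 0 -> g4 != 0 -> g5 != 0 -> g6 != 0 -> g7 != 0 ->
  ricci_op (ga a) (diag_metric g1 g2 g3 g4 g5 g6 g7) =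
  diag_mx (ricci_diag (brackets_of a g1 g2 g3 g4 g5 g6 g7)).
Proof.
move=> h1 h2 h3 h4 h5 h6 h7.
apply/matrixP => l j; rewrite /ricci_diag !mxE /ric /curv LC_ga // gaE !sum_ord7.
case: l => [[|[|[|[|[|[|[|l]]]]]]] ?] //; case: j => [[|[|[|[|[|[|[|j]]]]]]] ?] //=;
rewrite /diag_metric /=;
by field; rewrite ?h1 ?h2 ?h3 ?h4 ?h5 ?h6 ?h7.
Qed.
End Ricci.

Section Gram.
Variable R : realFieldType.

Lemma row_gram_eq0 (n : nat) (w : 'rV[R]_n) : w *m w^T = 0 -> w = 0.
Proof.
move/matrixP/(_ 0 0); rewrite !mxE => /eqP.
rewrite psumr_eq0 => [/allP w0|i _]; last by rewrite mxE -expr2 sqr_ge0.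
apply/rowP => i; rewrite mxE; apply/eqP; rewrite -sqrf_eq0 expr2.
by have := w0 i (mem_index_enum i); rewrite !mxE.
Qed.

Lemma pinvmx_gram_mul (m n : nat) (M : 'M[R]_(m, n)) (v b : 'rV_m) :
  b *m (M *m M^T) = v -> v *m pinvmx (M *m M^T) *m M = b *m M.
Proof.
move=> bv; set u := v *m pinvmx (M *m M^T).
have uv : u *m (M *m M^T) = v by apply: mulmxKpV; rewrite -bv submxMl.
have w0 : ((u - b) *m M) *m ((u - b) *m M)^T = 0.
  by rewrite trmx_mul mulmxA -(mulmxA _ M) mulmxBl uv bv subrr mul0mx.
by apply/eqP; rewrite -subr_eq0 -mulmxBl; apply/eqP/row_gram_eq0.
Qed.

End Gram.

Lemma sum_mul_delta (R : pzSemiRingType) (n : nat) (F : 'I_n -> R) (k : 'I_n) :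
  \sum_l F l * (l == k)%:R = F k.
Proof.
by rewrite (bigD1 k) //= eqxx mulr1 big1 ?addr0 // => l /negbTE ->; rewrite mulr0.
Qed.

Section Nikolayevsky.
Variables (R : realType) (n : nat) (c : 'I_n -> 'I_n -> 'I_n -> R).

Lemma nik_diag_eq (d : 'rV[R]_n) (b : 'rV_(size (root_triples c))) :
  b *m root_matrix c = d -> d *m (root_matrix c)^T = const_mx 1 ->
  nik_diag c = d + const_mx 1.
Proof.
by move=> bd d1; rewrite /nik_diag (@pinvmx_gram_mul _ _ _ _ _ b) ?bd // mulmxA bd.
Qed.

Definition graded_by_index :=
  forall i j k : 'I_n, (i < j)%N -> c i j k != 0 -> k.+1 = (i.+1 + j.+1)%N.

Lemma graded_row_mul_root_matrixT (lambda : R) : graded_by_index ->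
  (\row_l (lambda * l.+1%:R - 1)) *m (root_matrix c)^T = const_mx 1.
Proof.
move=> gr; apply/rowP => r; rewrite !mxE.
under eq_bigr do rewrite !mxE !mulrBr.
rewrite !sumrB !sum_mul_delta.
set t := tnth _ r.
have : t \in root_triples c by apply: mem_tnth.
rewrite mem_filter => /andP[/andP[ij /(gr _ _ _ ij) ->] _].
rewrite natrD; ring.
Qed.

End Nikolayevsky.

(* [e] is the sign of g_1 and [(A, D, G)] the signs of X1, X3, X7.  The metric is recovered
   from g_1 and the brackets by g3 = X1 g1 g2/(1-a)^2, g4 = X2 g1 g3, g5 = X3 g1 g4/a^2,
   g6 = X5 g1 g5, g7 = X7 g1 g6, with sign g2 = sign (X3 X2), X4 = X5 > 0 and
   sign X2 = sign X7. *)
Definition neg_indices (e : bool) (t : bool * bool * bool) : seq nat :=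
  let: (A, D, G) := t in
  let n2 := D (+) G in
  let n3 := ~~ A (+) e (+) n2 in
  let n4 := ~~ G (+) e (+) n3 in
  let n5 := ~~ D (+) e (+) n4 in
  let n6 := e (+) n5 in
  let n7 := ~~ G (+) e (+) n6 in
  [seq k <- iota 1 7 | nth false [:: e; n2; n3; n4; n5; n6; n7] k.-1].

Section Brackets.
Variable R : realFieldType.

Definition einstein_diag : 'rV[R]_7 := \row_k (- 2^-1 + 2^-1 * (k.+1%:R / 5)).

Variable a : R.
Hypotheses (a_neq0 : a != 0) (a_neq1 : a != 1).

Let one_sub_a_neq0 : 1 - a != 0. Proof. by rewrite subr_eq0 eq_sym. Qed.

Definition bracket_relations (x : brackets R) : Prop :=
  [/\ X2 x * X6 x = X4 x * X5 x, X3 x * X8 x = a ^+ 2 * (X6 x * X7 x)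
    & X1 x * X9 x = (1 - a) ^+ 2 * (X6 x * X7 x)].

(* The linear system forces X9 = X1, X8 = X3, X5 = X4; here s = X1 / (1 - a), q = X7 and
   x3 = X3. *)
Definition reduced_solution (s q x3 : R) : Prop :=
  [/\ q != 0, q + 1/5 != 0, x3 = 2/5 - q - (1 - a) * s, x3 ^+ 2 = a ^+ 2 * s ^+ 2
    & s ^+ 2 * (q + 3/5) = q * (q + 1/5) ^+ 2].

Definition reduced_brackets (s q x3 : R) : brackets R :=
  Brackets ((1 - a) * s) (1/5 + s ^+ 2 / q - q) x3 (1/5 + q - s ^+ 2 / q)
    (1/5 + q - s ^+ 2 / q) (s ^+ 2 / q) q x3 ((1 - a) * s).

Lemma brackets_of_relations (g1 g2 g3 g4 g5 g6 g7 : R) :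
  g1 != 0 -> g2 != 0 -> g3 != 0 -> g4 != 0 -> g5 != 0 -> g6 != 0 -> g7 != 0 ->
  bracket_relations (brackets_of a g1 g2 g3 g4 g5 g6 g7).
Proof.
by move=> h1 h2 h3 h4 h5 h6 h7; split => /=; field; rewrite ?h1 ?h2 ?h3 ?h4 ?h5 ?h6 ?h7.
Qed.

Lemma brackets_reduce (x : brackets R) :
  ricci_diag x = einstein_diag -> bracket_relations x ->
  X1 x != 0 -> X6 x != 0 -> X7 x != 0 ->
  exists s, reduced_solution s (X7 x) (X3 x) /\ x = reduced_brackets s (X7 x) (X3 x).
Proof.
case: x => x1 x2 x3 x4 x5 x6 x7 x8 x9 /= E [/= R1 R2 R3] h1 h6 h7.
have lin k := congr1 (fun r : 'rV[R]_7 => r 0 k) E.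
have := lin (@Ordinal 7 0 isT); have := lin (@Ordinal 7 1 isT);
have := lin (@Ordinal 7 2 isT); have := lin (@Ordinal 7 3 isT);
have := lin (@Ordinal 7 4 isT); have := lin (@Ordinal 7 5 isT);
have := lin (@Ordinal 7 6 isT); rewrite !mxE /= => E7 E6 E5 E4 E3 E2 E1.
have x9E : x9 = x1 by lra.
have x8E : x8 = x3 by lra.
have x5E : x5 = x4 by lra.
have x2E : x2 = 1/5 + x6 - x7 by lra.
have x4E : x4 = 1/5 + x7 - x6 by lra.
set s := x1 / (1 - a).
have x1E : x1 = (1 - a) * s by rewrite /s; field.
have s2E : s ^+ 2 = x6 * x7.
  by apply: (mulfI (expf_neq0 2 one_sub_a_neq0)); rewrite -R3 x9E x1E; ring.
have x6E : x6 = s ^+ 2 / x7 by rewrite s2E; field.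
have K : x6 * (x7 + 3/5) = (x7 + 1/5) ^+ 2 by move: R1; rewrite x2E x5E x4E => R1; lra.
exists s; split; last first.
  by rewrite /reduced_brackets -x6E x9E x8E x5E x4E x2E x1E.
split => //.
- apply: contraTneq h6 => x7E; rewrite negbK.
  have : x6 * (x7 + 3/5) == 0 by rewrite K x7E expr0n.
  by rewrite mulf_eq0 => /orP[] // /eqP; lra.
- lra.
- by rewrite expr2 -{2}x8E R2 s2E.
- by rewrite s2E -mulrA (mulrC x7) mulrA K mulrC.
Qed.

Section ReducedSolution.
Variables s q x3 : R.
Hypothesis sol : reduced_solution s q x3.

Lemma reduced_solution_s_neq0 : s != 0.
Proof.
case: sol => hq hq1 _ _ C; apply/eqP => s0; move: C.
rewrite s0 expr0n mul0r => /esym/eqP; rewrite mulf_eq0 sqrf_eq0.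
by rewrite (negbTE hq) (negbTE hq1).
Qed.

Lemma reduced_brackets_einstein : ricci_diag (reduced_brackets s q x3) = einstein_diag.
Proof.
case: sol => hq _ x3E _ _; apply/rowP => k; rewrite !mxE.
by case: k => [[|[|[|[|[|[|[|k]]]]]]] ?] //=; rewrite ?x3E; field.
Qed.

Let p_cubic : s ^+ 2 / q * (q + 3/5) = (q + 1/5) ^+ 2.
Proof. by case: sol => hq _ _ _ C; rewrite mulrAC C; field. Qed.

Lemma reduced_brackets_relations : bracket_relations (reduced_brackets s q x3).
Proof.
case: sol => hq _ _ x3s _; split => /=.
- by move: p_cubic; set p := s ^+ 2 / q => K; lra.
- by rewrite -expr2 x3s; field.
- by field.
Qed.

Lemma reduced_brackets_signs :
  0 < 1/5 + q - s ^+ 2 / q /\ (0 < 1/5 + s ^+ 2 / q - q) = (0 < q).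
Proof.
have s2 : 0 < s ^+ 2 by rewrite exprn_even_gt0 ?reduced_solution_s_neq0.
case: sol => hq hq1 _ _ _; move: p_cubic; set p := s ^+ 2 / q => K.
have t2 : 0 < (q + 1/5) ^+ 2 by rewrite exprn_even_gt0.
have E : (1/5 + p - q) * p = (1/5 + q - p) ^+ 2 by lra.
have [qn|qp] : q < 0 \/ 0 < q by move: hq; rewrite neq_lt => /orP.
- have pn : p < 0 by rewrite /p pmulr_rlt0 // invr_lt0.
  have q3 : q + 3/5 < 0 by nra.
  have x4p : 0 < 1/5 + q - p by nra.
  split => //; rewrite [0 < q]ltNge (ltW qn) /=.
  by apply/negbTE; rewrite -leNgt; nra.
- have pp : 0 < p by rewrite /p divr_gt0.
  have x4p : 0 < 1/5 + q - p by nra.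
  by split => //; rewrite qp; nra.
Qed.

Lemma reduced_brackets_neq0 :
  [/\ (1 - a) * s != 0, 1/5 + s ^+ 2 / q - q != 0, x3 != 0 & 1/5 + q - s ^+ 2 / q != 0].
Proof.
have [x4p _] := reduced_brackets_signs; have [R1 _ _] := reduced_brackets_relations.
have s0 := reduced_solution_s_neq0; case: sol => hq _ _ x3s _; move: R1 => /= R1.
split.
- by rewrite mulf_neq0 ?one_sub_a_neq0.
- apply: contraTneq x4p => x20; move: R1; rewrite x20 mul0r => /esym/eqP.
  by rewrite mulf_eq0 orbb => /eqP ->; rewrite ltxx.
- by rewrite -sqrf_eq0 x3s !mulf_neq0 ?expf_neq0.
- by rewrite lt0r_neq0.
Qed.
End ReducedSolution.

Lemma brackets_of_surj (x : brackets R) (g1 : R) : g1 != 0 -> bracket_relations x ->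
  X1 x != 0 -> X2 x != 0 -> X3 x != 0 -> X4 x != 0 -> X5 x != 0 -> X7 x != 0 ->
  exists g2 g3 g4 g5 g6 g7 : R,
    [/\ [/\ g2 != 0, g3 != 0, g4 != 0, g5 != 0 & g6 != 0], g7 != 0
      & brackets_of a g1 g2 g3 g4 g5 g6 g7 = x].
Proof.
case: x => x1 x2 x3 x4 x5 x6 x7 x8 x9 /= h0 [/= R1 R2 R3] h1 h2 h3 h4 h5 h7.
pose g2 := x3 * x2 * g1 ^+ 2 / (a ^+ 2 * x4).
pose g3 := x1 * g1 * g2 / (1 - a) ^+ 2.
pose g4 := x2 * g1 * g3.
pose g5 := x3 * g1 * g4 / a ^+ 2.
pose g6 := x5 * g1 * g5.
pose g7 := x7 * g1 * g6.
have n2 : g2 != 0 by rewrite /g2 !(mulf_neq0, invr_neq0, expf_neq0).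
have n3 : g3 != 0 by rewrite /g3 !(mulf_neq0, invr_neq0, expf_neq0) ?one_sub_a_neq0.
have n4 : g4 != 0 by rewrite /g4 !(mulf_neq0, invr_neq0, expf_neq0).
have n5 : g5 != 0 by rewrite /g5 !(mulf_neq0, invr_neq0, expf_neq0).
have n6 : g6 != 0 by rewrite /g6 !(mulf_neq0, invr_neq0, expf_neq0).
have n7 : g7 != 0 by rewrite /g7 !(mulf_neq0, invr_neq0, expf_neq0).
exists g2, g3, g4, g5, g6, g7; split => //.
have x6E : x6 = x4 * x5 / x2 by rewrite -R1; field.
have x8E : x8 = a ^+ 2 * (x6 * x7) / x3 by rewrite -R2; field.
have x9E : x9 = (1 - a) ^+ 2 * (x6 * x7) / x1 by rewrite -R3; field.
rewrite x9E x8E x6E /brackets_of /g7 /g6 /g5 /g4 /g3 /g2.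
by congr Brackets; field; rewrite ?h0 ?h1 ?h2 ?h3 ?h4 ?h5 ?h7 ?a_neq0 ?one_sub_a_neq0.
Qed.

Lemma lt0_neq0E (x : R) : x != 0 -> (x < 0) = ~~ (0 < x).
Proof. by move=> hx; rewrite lt0r hx ltNge. Qed.

Lemma signature_reduced (g1 g2 g3 g4 g5 g6 g7 s q x3 : R) :
  g1 != 0 -> g2 != 0 -> g3 != 0 -> g4 != 0 -> g5 != 0 -> g6 != 0 -> g7 != 0 ->
  reduced_solution s q x3 ->
  brackets_of a g1 g2 g3 g4 g5 g6 g7 = reduced_brackets s q x3 ->
  [set i | diag_metric g1 g2 g3 g4 g5 g6 g7 i < 0] =
    sg (neg_indices (g1 < 0) (0 < (1 - a) * s, 0 < x3, 0 < q)).
Proof.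
move=> h1 h2 h3 h4 h5 h6 h7 sol E.
have [x4p x2q] := reduced_brackets_signs sol.
have [hx1 hx2 hx3 _] := reduced_brackets_neq0 sol.
case: (sol) => hq _ _ _ _.
move: E x4p x2q hx1 hx2; rewrite /brackets_of /reduced_brackets /=.
set x1 := (1 - a) * s; set x2 := 1/5 + _ - q; set x4 := 1/5 + q - _.
move=> -[E1 E2 E3 E4 E5 _ E7 _ _] x4p x2q hx1 hx2.
have a2 : 0 < a ^+ 2 by rewrite exprn_even_gt0.
have a12 : 0 < (1 - a) ^+ 2 by rewrite exprn_even_gt0.
have g12 : 0 < g1 ^+ 2 by rewrite exprn_even_gt0.
have I2 : g2 * (a ^+ 2 * x4) = x3 * x2 * g1 ^+ 2.
  by rewrite -E2 -E3 -E4; field; rewrite ?h1 ?h2 ?h3 ?h4 ?h5.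
have I3 : g3 * (1 - a) ^+ 2 = x1 * g1 * g2 by rewrite -E1; field; rewrite ?h1 ?h2.
have I4 : g4 = x2 * g1 * g3 by rewrite -E2; field; rewrite ?h1 ?h3.
have I5 : g5 * a ^+ 2 = x3 * g1 * g4 by rewrite -E3; field; rewrite ?h1 ?h4.
have I6 : g6 = x4 * g1 * g5 by rewrite -E5; field; rewrite ?h1 ?h5.
have I7 : g7 = q * g1 * g6 by rewrite -E7; field; rewrite ?h1 ?h6.
have S2 : (g2 < 0) = ~~ (0 < x3) (+) ~~ (0 < q).
  rewrite -(pmulr_llt0 _ (mulr_gt0 a2 x4p)) I2 pmulr_llt0 // neq0_mulr_lt0 //.
  by rewrite !lt0_neq0E // x2q.
have S3 : (g3 < 0) = ~~ (0 < x1) (+) (g1 < 0) (+) (g2 < 0).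
  rewrite -(pmulr_llt0 _ a12) I3 neq0_mulr_lt0 ?(mulf_neq0 hx1 h1) // neq0_mulr_lt0 //.
  by rewrite (lt0_neq0E hx1).
have S4 : (g4 < 0) = ~~ (0 < q) (+) (g1 < 0) (+) (g3 < 0).
  rewrite I4 neq0_mulr_lt0 ?mulf_neq0 // neq0_mulr_lt0 //.
  by rewrite (lt0_neq0E hx2) x2q.
have S5 : (g5 < 0) = ~~ (0 < x3) (+) (g1 < 0) (+) (g4 < 0).
  rewrite -(pmulr_llt0 _ a2) I5 neq0_mulr_lt0 ?mulf_neq0 // neq0_mulr_lt0 //.
  by rewrite (lt0_neq0E hx3).
have S6 : (g6 < 0) = (g1 < 0) (+) (g5 < 0).
  by rewrite I6 -mulrA pmulr_rlt0 // neq0_mulr_lt0.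
have S7 : (g7 < 0) = ~~ (0 < q) (+) (g1 < 0) (+) (g6 < 0).
  rewrite I7 neq0_mulr_lt0 ?mulf_neq0 // neq0_mulr_lt0 //.
  by rewrite (lt0_neq0E hq).
apply/setP => i; rewrite /neg_indices /sg !inE.
case: i => [[|[|[|[|[|[|[|i]]]]]]] ?] //; rewrite /diag_metric /=;
rewrite ?S7 ?S6 ?S5 ?S4 ?S3 ?S2;
by case: (g1 < 0); case: (0 < x1); case: (0 < x3); case: (0 < q).
Qed.
End Brackets.

Section Cubic.
Variable R : rcfType.

Definition cubic (m q : R) : R :=
  (2/5 - q) ^+ 2 * (q + 3/5) - m ^+ 2 * q * (q + 1/5) ^+ 2.

Definition crit_m2 : R := (123 * Num.sqrt 41 - 767) / 16.

Definition double_root : R := - (7 + Num.sqrt 41) / 10.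

Lemma sqrt41_bounds : let w := Num.sqrt (41 : R) in [/\ w ^+ 2 = 41, 32/5 < w & w < 641/100].
Proof.
move=> w; have w2 : w ^+ 2 = 41 by rewrite sqr_sqrtr //; lra.
by have w0 : 0 <= w := sqrtr_ge0 _; split => //; nra.
Qed.

Lemma crit_m2_gt1 : 1 < crit_m2.
Proof. by have [_ wl _] := sqrt41_bounds; rewrite /crit_m2; lra. Qed.

(* At m ^+ 2 = crit_m2 = 4 beta^2 the cubic acquires the double root [double_root]: this is
   where beta comes from. *)
Lemma cubic_decomp (m q : R) :
  cubic m q = (q - double_root) ^+ 2 * ((1 - crit_m2) * q + (135 - 21 * Num.sqrt 41) / 10)
              + (crit_m2 - m ^+ 2) * q * (q + 1/5) ^+ 2.
Proof.
have [w2 _ _] := sqrt41_bounds; move: w2; set w := Num.sqrt 41 => w2.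
have E : cubic m q = (q - double_root) ^+ 2 * ((1 - crit_m2) * q + (135 - 21 * w) / 10)
     + (crit_m2 - m ^+ 2) * q * (q + 1/5) ^+ 2
     + (w ^+ 2 - 41) * (123/64 * (5 * q) * w + 21/8 * w + 123/16 * (5 * q) ^+ 2
                        + 1611/64 * (5 * q) + 159/8) / 125.
  by rewrite /cubic /double_root /crit_m2 -/w; field.
by rewrite E w2 subrr mul0r mul0r addr0.
Qed.

Lemma cubic_ivt (m lo hi : R) : lo <= hi -> cubic m lo * cubic m hi <= 0 ->
  exists2 q, lo <= q <= hi & cubic m q = 0.
Proof.
move=> lohi sgn.
pose P : {poly R} := ((2/5)%:P - 'X) ^+ 2 * ('X + (3/5)%:P)
                     - (m ^+ 2)%:P * 'X * ('X + (1/5)%:P) ^+ 2.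
have PE x : P.[x] = cubic m x by rewrite /P /cubic !hornerE.
have sgnP : P.[lo] * P.[hi] <= 0 by rewrite !PE.
have [q] := polyrcf.poly_ivt lohi sgnP.
by rewrite in_itv /= => qlh /rootP; rewrite PE; exists q.
Qed.

Lemma cubic_at0 (m : R) : cubic m 0 = 12/125.
Proof. by rewrite /cubic; field. Qed.

Lemma cubic_at2_5 (m : R) : cubic m (2/5) = - 18/125 * m ^+ 2.
Proof. by rewrite /cubic; field. Qed.

Lemma cubic_atN3_5 (m : R) : cubic m (- 3/5) = 12/125 * m ^+ 2.
Proof. by rewrite /cubic; field. Qed.

Section Roots.
Variable m : R.
Hypothesis m_neq0 : m != 0.

Lemma cubic_root_small : exists2 q, 0 < q < 2/5 & cubic m q = 0.
Proof.
have m2 : 0 < m ^+ 2 by rewrite exprn_even_gt0.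
have [q /andP[q0 q1] cq] : exists2 q, 0 <= q <= 2/5 & cubic m q = 0.
  by apply: cubic_ivt; [lra | rewrite cubic_at0 cubic_at2_5; nra].
exists q => //; rewrite !lt_def q0 q1 !andbT.
apply/andP; split; apply/eqP => qE; move: cq.
- by rewrite qE cubic_at0; lra.
- by rewrite -qE cubic_at2_5; nra.
Qed.

Lemma cubic_root_big : m ^+ 2 < 1 -> exists2 q, 2/5 < q & cubic m q = 0.
Proof.
move=> m21; have m2 : 0 < m ^+ 2 by rewrite exprn_even_gt0.
set T := 1 / (1 - m ^+ 2).
have mT : m ^+ 2 * T = T - 1 by rewrite /T; field; apply/eqP; lra.
have T1 : 1 <= T by rewrite /T ler_pdivlMr; lra.
have cT : 0 < cubic m T.
  by rewrite /cubic -mulrA (mulrA (m ^+ 2)) mT; nra.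
have [q /andP[q0 q1] cq] : exists2 q, 2/5 <= q <= T & cubic m q = 0.
  by apply: cubic_ivt; [lra | rewrite cubic_at2_5; nra].
exists q => //; rewrite lt_def q0 andbT.
by apply/eqP => qE; move: cq; rewrite qE cubic_at2_5; nra.
Qed.

Lemma cubic_root_neg : m ^+ 2 <= crit_m2 -> exists2 q, q < - 3/5 & cubic m q = 0.
Proof.
move=> mc; have m2 : 0 < m ^+ 2 by rewrite exprn_even_gt0.
have [_ wl _] := sqrt41_bounds.
have q0lt : double_root < - 3/5 by rewrite /double_root; lra.
have cq0 : cubic m double_root <= 0.
  rewrite cubic_decomp subrr expr0n /= mul0r add0r.
  rewrite -mulrA mulr_ge0_le0 ?subr_ge0 // mulr_le0_ge0 ?sqr_ge0 //; lra.
have [q /andP[q0 q1] cq] : exists2 q, double_root <= q <= - 3/5 & cubic m q = 0.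
  by apply: cubic_ivt; [lra | rewrite cubic_atN3_5; nra].
exists q => //; rewrite lt_def q1 andbT.
by apply/eqP => qE; move: cq; rewrite -qE cubic_atN3_5; nra.
Qed.
End Roots.

Lemma cubic_root_gt2_5 (m q : R) : cubic m q = 0 -> 2/5 < q -> m ^+ 2 < 1.
Proof.
rewrite /cubic => /eqP; rewrite subr_eq0 => /eqP c0 q25.
have t2 : 0 < (q + 1/5) ^+ 2 by nra.
have P0 : 0 < q * (q + 1/5) ^+ 2 by rewrite pmulr_lgt0 //; lra.
have : (2/5 - q) ^+ 2 * (q + 3/5) < q * (q + 1/5) ^+ 2 by nra.
by rewrite c0 -mulrA -{2}(mul1r (q * _)) ltr_pM2r.
Qed.

Lemma cubic_root_ltN3_5 (m q : R) : cubic m q = 0 -> q < - 3/5 -> m ^+ 2 <= crit_m2.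
Proof.
move=> c0 q35; have [_ wl wu] := sqrt41_bounds; have c1 := crit_m2_gt1.
have L0 : 0 < (1 - crit_m2) * q + (135 - 21 * Num.sqrt 41) / 10 by nra.
have t2 : 0 < (q + 1/5) ^+ 2 by nra.
have N0 : q * (q + 1/5) ^+ 2 < 0 by rewrite pmulr_llt0 //; lra.
move/eqP: c0; rewrite cubic_decomp addr_eq0 => /eqP c0.
have : q * (q + 1/5) ^+ 2 * (crit_m2 - m ^+ 2) <= 0.
  by rewrite mulrC mulrA -[X in X <= 0]opprK -c0 oppr_le0 mulr_ge0 ?sqr_ge0 ?ltW.
by rewrite nmulr_rle0 // subr_ge0.
Qed.

End Cubic.

Ltac decide_sign :=
  solve [ apply/idP; nra | apply/negbTE; rewrite -leNgt; nra | apply/idP/idP => ?; nra ].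

Section Beta.
Variable R : realType.

Lemma beta_ge0 : 0 <= beta R.
Proof.
have [_ wl _] := sqrt41_bounds R.
by rewrite /beta divr_ge0 ?sqrtr_ge0.
Qed.

Lemma four_beta_sq : 4 * beta R ^+ 2 = crit_m2 R.
Proof.
have [_ wl _] := sqrt41_bounds R.
by rewrite /beta expr_div_n sqr_sqrtr /crit_m2; [field | lra].
Qed.

Lemma beta_gt_half : 2^-1 < beta R.
Proof.
have := crit_m2_gt1 R; rewrite -four_beta_sq => c1.
by have := beta_ge0; nra.
Qed.

Lemma crit_m2_range (a : R) :
  ((1 - 2 * a) ^+ 2 <= crit_m2 R) = (2^-1 - beta R <= a <= 2^-1 + beta R).
Proof.
rewrite -four_beta_sq; have b0 := beta_ge0.
by apply/idP/andP => [h|[h1 h2]]; [split; nra | nra].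
Qed.
End Beta.

Section SignPatterns.
Variables (R : realType) (a : R).
Hypotheses (a_neq0 : a != 0) (a_neq1 : a != 1).

(* The first two patterns come from x3 = a s, the others from the roots of the cubic in
   (0, oo) and in (-oo, -3/5). *)
Definition sign_patterns : seq (bool * bool * bool) :=
  [:: (a < 1, 0 < a, true); (a < 1, 0 < a, false)]
  ++ (if 0 < a < 1 then [:: (true, false, true); (false, true, true)]
      else [:: (true, true, true)])
  ++ (if 2^-1 - beta R <= a < 2^-1 then [:: (true, a < 0, false)] else [::])
  ++ (if 2^-1 < a <= 2^-1 + beta R then [:: (1 < a, true, false)] else [::]).

Definition realized_pattern (t : bool * bool * bool) : Prop :=
  exists s q x3, reduced_solution a s q x3 /\ (0 < (1 - a) * s, 0 < x3, 0 < q) = t.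

Lemma plus_solutions :
  reduced_solution a (1/5) (1/5) (a / 5) /\ reduced_solution a (6/5) (- 4/5) (6 * a / 5).
Proof.
by split; split; try field; first [done | apply: lt0r_neq0; lra | apply: ltr0_neq0; lra].
Qed.

Lemma minus_solution (q : R) : 1 - 2 * a != 0 -> cubic (1 - 2 * a) q = 0 ->
  reduced_solution a ((2/5 - q) / (1 - 2 * a)) q (- a * ((2/5 - q) / (1 - 2 * a))).
Proof.
move=> m0 cq; set s := (2/5 - q) / _.
have ms : (1 - 2 * a) * s = 2/5 - q by rewrite /s; field.
split.
- by apply/eqP => q0; move: cq; rewrite q0 cubic_at0; lra.
- apply/eqP => q0; have qE : q = - 1/5 by lra.
  by move: cq; rewrite qE /cubic; lra.
- by rewrite -ms; ring.
- by ring.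
- apply: (mulfI (expf_neq0 2 m0)); rewrite mulrA -exprMn ms.
  by move/eqP: cq; rewrite subr_eq0 => /eqP ->; rewrite !mulrA.
Qed.

Lemma plus_branch_pattern (s q : R) : reduced_solution a s q (a * s) ->
  (0 < (1 - a) * s, 0 < a * s, 0 < q) \in sign_patterns.
Proof.
case=> _ _ x3E _ C; have qE : q = 2/5 - s by lra.
have : (5 * s - 1) * (5 * s - 6) = 0.
  have -> : (5 * s - 1) * (5 * s - 6) =
            125/3 * (q * (q + 1/5) ^+ 2 - s ^+ 2 * (q + 3/5)) by rewrite qE; field.
  by rewrite C subrr mulr0.
rewrite /sign_patterns mem_cat; move/eqP; rewrite mulf_eq0 => /orP[] /eqP sE.
- have -> : (0 < (1 - a) * s, 0 < a * s, 0 < q) = (a < 1, 0 < a, true).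
    by congr (_, _, _); decide_sign.
  by rewrite mem_head.
- have -> : (0 < (1 - a) * s, 0 < a * s, 0 < q) = (a < 1, 0 < a, false).
    by congr (_, _, _); decide_sign.
  by rewrite !inE eqxx orbT.
Qed.

Lemma not_in01 : ~~ (0 < a < 1) -> a < 0 \/ 1 < a.
Proof.
rewrite negb_and -!leNgt => /orP[a0|a1]; [left | right].
- by rewrite lt_def eq_sym a_neq0.
- by rewrite lt_def a_neq1.
Qed.

Lemma minus_pattern_neg (s q : R) :
  (1 - 2 * a) * s = 2/5 - q -> cubic (1 - 2 * a) q = 0 -> q < - 3/5 ->
  (0 < (1 - a) * s, 0 < - a * s, 0 < q) \in sign_patterns.
Proof.
move=> ms cq qn; have := cubic_root_ltN3_5 cq qn; rewrite crit_m2_range => /andP[c1 c2].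
have msp : 0 < (1 - 2 * a) * s by lra.
rewrite /sign_patterns !mem_cat.
have [ah|ah] : a < 2^-1 \/ 2^-1 < a.
  by case: (ltgtP a 2^-1) => [|| aE]; [left | right | move: msp; rewrite aE; lra].
- have -> : (0 < (1 - a) * s, 0 < - a * s, 0 < q) = (true, a < 0, false).
    by congr (_, _, _); decide_sign.
  by rewrite (_ : 2^-1 - beta R <= a < 2^-1) ?c1 //= !inE eqxx /= ?orbT.
- have -> : (0 < (1 - a) * s, 0 < - a * s, 0 < q) = (1 < a, true, false).
    by congr (_, _, _); decide_sign.
  by rewrite (_ : 2^-1 < a <= 2^-1 + beta R) ?ah //= !inE eqxx /= ?orbT.
Qed.

Lemma minus_pattern_pos (s q : R) : s != 0 ->
  (1 - 2 * a) * s = 2/5 - q -> cubic (1 - 2 * a) q = 0 -> 0 < q ->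
  (0 < (1 - a) * s, 0 < - a * s, 0 < q) \in sign_patterns.
Proof.
move=> s_neq0 ms cq qp; rewrite /sign_patterns !mem_cat.
case: (boolP (0 < a < 1)) => [/andP[a0 a1]|a01].
  have [sn|sp] : s < 0 \/ 0 < s by move: s_neq0; rewrite neq_lt => /orP.
  - have -> : (0 < (1 - a) * s, 0 < - a * s, 0 < q) = (false, true, true).
      by congr (_, _, _); decide_sign.
    by rewrite !inE eqxx /= ?orbT.
  - have -> : (0 < (1 - a) * s, 0 < - a * s, 0 < q) = (true, false, true).
      by congr (_, _, _); decide_sign.
    by rewrite !inE eqxx /= ?orbT.
have q25 : q < 2/5.
  rewrite ltNge; apply: contra a01; rewrite le_eqVlt => /orP[/eqP q25|q25].
  - have : (1 - 2 * a) * s = 0 by rewrite ms q25 subrr.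
    by move/eqP; rewrite mulf_eq0 (negbTE s_neq0) orbF => /eqP a2; apply/andP; split; lra.
  - by have := cubic_root_gt2_5 cq q25 => m1; apply/andP; split; nra.
have msp : 0 < (1 - 2 * a) * s by lra.
have -> : (0 < (1 - a) * s, 0 < - a * s, 0 < q) = (true, true, true).
  by case: (not_in01 a01) => ?; congr (_, _, _); decide_sign.
by rewrite !inE eqxx /= ?orbT.
Qed.

Lemma minus_branch_pattern (s q : R) : reduced_solution a s q (- a * s) ->
  (0 < (1 - a) * s, 0 < - a * s, 0 < q) \in sign_patterns.
Proof.
move=> sol; have s0 := reduced_solution_s_neq0 sol.
case: sol => hq hq1 x3E _ C.
have ms : (1 - 2 * a) * s = 2/5 - q by lra.
have cq : cubic (1 - 2 * a) q = 0.
  have -> : cubic (1 - 2 * a) q =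
            (1 - 2 * a) ^+ 2 * (s ^+ 2 * (q + 3/5) - q * (q + 1/5) ^+ 2).
    by rewrite /cubic -ms; ring.
  by rewrite C subrr mulr0.
have s2 : 0 < s ^+ 2 by rewrite exprn_even_gt0.
have : 0 < s ^+ 2 * (q * (q + 3/5)).
  by rewrite mulrCA C mulrA -expr2 mulr_gt0 // exprn_even_gt0.
rewrite pmulr_rgt0 // => qq; have [qn|qp] := ltP q 0.
- by apply: minus_pattern_neg => //; nra.
- by apply: minus_pattern_pos => //; rewrite lt_def hq.
Qed.

Lemma reduced_solution_pattern (s q x3 : R) : reduced_solution a s q x3 ->
  (0 < (1 - a) * s, 0 < x3, 0 < q) \in sign_patterns.
Proof.
move=> sol; case: (sol) => _ _ _ x3s _.
have : (x3 == a * s) || (x3 == - a * s) by rewrite mulNr -eqf_sqr exprMn x3s.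
case/orP => /eqP x3E; move: sol; rewrite x3E.
- exact: plus_branch_pattern.
- exact: minus_branch_pattern.
Qed.

Lemma minus_realized (q : R) : 1 - 2 * a != 0 -> cubic (1 - 2 * a) q = 0 ->
  exists2 s, (1 - 2 * a) * s = 2/5 - q &
             realized_pattern (0 < (1 - a) * s, 0 < - a * s, 0 < q).
Proof.
move=> m0 cq; exists ((2/5 - q) / (1 - 2 * a)); first by field.
by eexists _, q, _; split; first exact: minus_solution.
Qed.

Lemma realized_mixed : 0 < a < 1 ->
  realized_pattern (true, false, true) /\ realized_pattern (false, true, true).
Proof.
move=> /andP[a0 a1].
have [aE|ah] := eqVneq a 2^-1.
  pose r := Num.sqrt (18/125 : R).
  have r2 : r ^+ 2 = 18/125 by rewrite sqr_sqrtr //; lra.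
  have rp : 0 < r by rewrite sqrtr_gt0; lra.
  have sol u : u ^+ 2 = 18/125 -> reduced_solution a u (2/5) (- a * u).
    move=> u2; split; rewrite ?aE; try by apply: lt0r_neq0; lra.
    + by field.
    + by field.
    + by rewrite u2; field.
  split; [exists r | exists (- r)]; do 2 eexists;
    (split; first by apply: sol; rewrite ?sqrrN); congr (_, _, _); decide_sign.
have m0 : 1 - 2 * a != 0 by apply: contraNneq ah => m0; apply/eqP; lra.
have m21 : (1 - 2 * a) ^+ 2 < 1 by nra.
have [q1 /andP[q10 q12] c1] := cubic_root_small m0.
have [q2 q22 c2] := cubic_root_big m0 m21.
have [s1 ms1 real1] := minus_realized m0 c1.
have [s2 ms2 real2] := minus_realized m0 c2.
have [am|ap] : a < 2^-1 \/ 2^-1 < a by move: ah; rewrite neq_lt => /orP.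
- have e1 : (0 < (1 - a) * s1, 0 < - a * s1, 0 < q1) = (true, false, true).
    by congr (_, _, _); decide_sign.
  have e2 : (0 < (1 - a) * s2, 0 < - a * s2, 0 < q2) = (false, true, true).
    by congr (_, _, _); decide_sign.
  by rewrite e1 in real1; rewrite e2 in real2.
- have e1 : (0 < (1 - a) * s1, 0 < - a * s1, 0 < q1) = (false, true, true).
    by congr (_, _, _); decide_sign.
  have e2 : (0 < (1 - a) * s2, 0 < - a * s2, 0 < q2) = (true, false, true).
    by congr (_, _, _); decide_sign.
  by rewrite e1 in real1; rewrite e2 in real2.
Qed.

Lemma sign_patterns_realized (t : bool * bool * bool) :
  t \in sign_patterns -> realized_pattern t.
Proof.
have [p1 p2] := plus_solutions; have b0 := beta_ge0 R.
rewrite /sign_patterns !mem_cat => /or4P[| | |].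
- rewrite !inE => /orP[] /eqP ->.
  + by exists (1/5), (1/5), (a / 5); split => //; congr (_, _, _); decide_sign.
  + by exists (6/5), (- 4/5), (6 * a / 5); split => //; congr (_, _, _); decide_sign.
- case: ifP => [a01|a01]; rewrite !inE.
    by have [r1 r2] := realized_mixed a01; case/orP => /eqP ->.
  move=> /eqP ->; have aa := not_in01 (negbT a01).
  have m0 : 1 - 2 * a != 0 by apply/eqP; case: aa => ?; lra.
  have [q /andP[q0 q25] cq] := cubic_root_small m0.
  have [s ms real] := minus_realized m0 cq.
  have e : (0 < (1 - a) * s, 0 < - a * s, 0 < q) = (true, true, true).
    by case: aa => ?; congr (_, _, _); decide_sign.
  by rewrite -e.
- case: ifP => // /andP[c1 ah]; rewrite inE => /eqP ->.
  have mc : (1 - 2 * a) ^+ 2 <= crit_m2 R by rewrite crit_m2_range c1 /=; lra.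
  have m0 : 1 - 2 * a != 0 by apply/eqP; lra.
  have [q qn cq] := cubic_root_neg m0 mc.
  have [s ms real] := minus_realized m0 cq.
  have e : (0 < (1 - a) * s, 0 < - a * s, 0 < q) = (true, a < 0, false).
    by congr (_, _, _); decide_sign.
  by rewrite -e.
- case: ifP => // /andP[ah c2]; rewrite inE => /eqP ->.
  have mc : (1 - 2 * a) ^+ 2 <= crit_m2 R by rewrite crit_m2_range c2 andbT; lra.
  have m0 : 1 - 2 * a != 0 by apply/eqP; lra.
  have [q qn cq] := cubic_root_neg m0 mc.
  have [s ms real] := minus_realized m0 cq.
  have e : (0 < (1 - a) * s, 0 < - a * s, 0 < q) = (1 < a, true, false).
    by congr (_, _, _); decide_sign.
  by rewrite -e.
Qed.

End SignPatterns.

Section NikolayevskyGa.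
Variables (R : realType) (a : R).
Hypotheses (a_neq0 : a != 0) (a_neq1 : a != 1).

Lemma ga_graded : graded_by_index (ga a).
Proof.
move=> i j k ij; rewrite /ga ij oppr_eq0.
case: i ij => [[|[|[|[|[|[|[|i]]]]]]] ?] //; case: j => [[|[|[|[|[|[|[|j]]]]]]] ?] //;
by case: k => [[|[|[|[|[|[|[|k]]]]]]] ?] //=; rewrite eqxx.
Qed.

Definition triple_val (t : 'I_7 * 'I_7 * 'I_7) : nat * nat * nat :=
  (val t.1.1, val t.1.2, val t.2).

Definition ga_roots : seq (nat * nat * nat) :=
  [:: (0, 1, 2); (0, 2, 3); (0, 3, 4); (0, 4, 5); (0, 5, 6); (1, 2, 4); (1, 3, 5);
      (1, 4, 6); (2, 3, 6)]%N.

Lemma enum_ord7 : enum 'I_7 = [:: @Ordinal 7 0 isT; @Ordinal 7 1 isT; @Ordinal 7 2 isT;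
  @Ordinal 7 3 isT; @Ordinal 7 4 isT; @Ordinal 7 5 isT; @Ordinal 7 6 isT].
Proof. by apply: (inj_map val_inj); rewrite val_enum_ord. Qed.

Lemma root_triples_ga : map triple_val (root_triples (ga a)) = ga_roots.
Proof.
rewrite /root_triples (@eq_filter _ _
  (fun t : 'I_7 * 'I_7 * 'I_7 => (t.1.1 < t.1.2)%N && (triple_val t \in ga_roots)));
  last first.
  move=> [[i j] k] /=; case: ltnP => //= ij; rewrite /ga ij oppr_eq0.
  case: i ij => [[|[|[|[|[|[|[|i]]]]]]] ?] //; case: j => [[|[|[|[|[|[|[|j]]]]]]] ?] //;
  case: k => [[|[|[|[|[|[|[|k]]]]]]] ?] //= _;
  by rewrite ?eqxx ?oner_eq0 ?a_neq0 // subr_eq0 eq_sym.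
by rewrite enum_ord7; vm_compute.
Qed.

(* The combination -1/5 [e1,e3] + 3/5 [e2,e3] + 3/5 [e1,e5] + 2/5 [e1,e6] of rows
   of the root matrix is the row (k/5 - 1)_k. *)
Definition root_weight (u : nat * nat * nat) : R :=
  match u with
  | (0, 2, 3)%N => - 1/5 | (1, 2, 4)%N => 3/5 | (0, 4, 5)%N => 3/5 | (0, 5, 6)%N => 2/5
  | _ => 0
  end.

Lemma nik_diag_ga : nik_diag (ga a) = \row_l (l.+1%:R / 5).
Proof.
set d := \row_(l < 7) (5^-1 * l.+1%:R - 1 : R).
have -> : \row_l (l.+1%:R / 5) = d + const_mx 1.
  by apply/rowP => l; rewrite !mxE; ring.
set rt := root_triples (ga a).
pose b := \row_r root_weight (triple_val (tnth (in_tuple rt) r)).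
apply: (@nik_diag_eq _ _ _ _ b); last exact/graded_row_mul_root_matrixT/ga_graded.
pose G (l : 'I_7) (u : nat * nat * nat) : R :=
  root_weight u * ((val l == u.2)%:R - (val l == u.1.1)%:R - (val l == u.1.2)%:R).
apply/rowP => l; rewrite !mxE.
rewrite (eq_bigr (fun r => G l (triple_val (tnth (in_tuple rt) r)))); last first.
  by move=> r _; rewrite !mxE /G /triple_val -!val_eqE.
rewrite -(big_tnth _ _ rt xpredT (fun t => G l (triple_val t))).
rewrite -(big_map triple_val xpredT (G l)) root_triples_ga.
rewrite !big_cons big_nil /G /=.
by case: l => [[|[|[|[|[|[|[|l]]]]]]] ?] //=; field.
Qed.

Lemma einstein_target_ga :
  (- 2^-1)%:M + 2^-1 *: nikolayevsky (ga a) = diag_mx (einstein_diag R).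
Proof.
rewrite /nikolayevsky nik_diag_ga; apply/matrixP => i j; rewrite !mxE.
by case: eqVneq => _; rewrite ?mulr1n ?mulr0n ?mulr0 ?addr0.
Qed.

End NikolayevskyGa.

Lemma diag_metric_eta (R : nmodType) (g : 'I_7 -> R) :
  g = diag_metric (g (@Ordinal 7 0 isT)) (g (@Ordinal 7 1 isT)) (g (@Ordinal 7 2 isT))
    (g (@Ordinal 7 3 isT)) (g (@Ordinal 7 4 isT)) (g (@Ordinal 7 5 isT))
    (g (@Ordinal 7 6 isT)).
Proof.
apply: functional_extensionality => -[[|[|[|[|[|[|[|i]]]]]]] ?] //=;
by rewrite /diag_metric /=; congr g; apply: val_inj.
Qed.

Lemma mem_iff_all (T : eqType) (s1 s2 : seq T) (x : T) :
  all (mem s2) s1 -> all (mem s1) s2 -> (x \in s1 <-> x \in s2).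
Proof. by move=> /allP s12 /allP s21; split => [/s12|/s21]. Qed.

Section Signatures.
Variables (R : realType) (a : R).
Hypotheses (a_neq0 : a != 0) (a_neq1 : a != 1).

Lemma inS_ga_iff (sigma : {set 'I_7}) : inS (ga a) sigma <->
  exists e t, t \in sign_patterns a /\ sigma = sg (neg_indices e t).
Proof.
split.
- case=> g [gnz [ric ->]]; move: ric; rewrite /signature [g]diag_metric_eta.
  set g1 := g _; set g2 := g _; set g3 := g _; set g4 := g _; set g5 := g _;
  set g6 := g _; set g7 := g _.
  have h1 : g1 != 0 := gnz _; have h2 : g2 != 0 := gnz _; have h3 : g3 != 0 := gnz _.
  have h4 : g4 != 0 := gnz _; have h5 : g5 != 0 := gnz _; have h6 : g6 != 0 := gnz _.
  have h7 : g7 != 0 := gnz _.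
  rewrite ricci_op_ga // einstein_target_ga // => /matrixP ric.
  set x := brackets_of a g1 g2 g3 g4 g5 g6 g7.
  have E : ricci_diag x = einstein_diag R.
    by apply/rowP => k; have := ric k k; rewrite !mxE eqxx !mulr1n.
  have n1 : X1 x != 0 by rewrite /= !(mulf_neq0, invr_neq0, expf_neq0) // subr_eq0 eq_sym.
  have n6 : X6 x != 0 by rewrite /= !(mulf_neq0, invr_neq0).
  have n7 : X7 x != 0 by rewrite /= !(mulf_neq0, invr_neq0).
  have [s [sol xE]] := brackets_reduce a_neq1 E (brackets_of_relations a h1 h2 h3 h4 h5 h6 h7)
    n1 n6 n7.
  exists (g1 < 0), (0 < (1 - a) * s, 0 < X3 x, 0 < X7 x); split.
  + exact (reduced_solution_pattern a_neq0 a_neq1 sol).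
  + by rewrite (signature_reduced a_neq0 a_neq1 h1 h2 h3 h4 h5 h6 h7 sol xE).
- case=> e [t [tin ->]].
  have [s [q [x3 [sol <-]]]] := sign_patterns_realized a_neq0 a_neq1 tin.
  have [n1 n2 n3 n4] := reduced_brackets_neq0 a_neq0 a_neq1 sol.
  have hq : q != 0 by case: sol.
  have g1nz : (if e then -1 else 1 : R) != 0 by case: e; rewrite ?oppr_eq0 oner_eq0.
  have [g2 [g3 [g4 [g5 [g6 [g7 [[h2 h3 h4 h5 h6] h7 E]]]]]]] :=
    brackets_of_surj a_neq0 a_neq1 g1nz (reduced_brackets_relations sol) n1 n2 n3 n4 n4 hq.
  exists (diag_metric (if e then -1 else 1) g2 g3 g4 g5 g6 g7); split; [|split].
  + by case=> [[|[|[|[|[|[|[|i]]]]]]] ?].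
  + by rewrite ricci_op_ga // E reduced_brackets_einstein // einstein_target_ga.
  + rewrite /signature (signature_reduced a_neq0 a_neq1 g1nz h2 h3 h4 h5 h6 h7 sol E).
    by case: (e); rewrite ?ltrN10 ?ltr10.
Qed.

Definition signature_list : seq {set 'I_7} :=
  [seq sg (neg_indices e t) | e <- [:: true; false], t <- sign_patterns a].

Lemma inS_ga_list (sigma : {set 'I_7}) : inS (ga a) sigma <-> sigma \in signature_list.
Proof.
rewrite inS_ga_iff //; split.
- by case=> e [t [tin ->]]; apply/allpairsP; exists (e, t); case: e.
- by case/allpairsP => -[e t] /= [_ tin ->]; exists e, t.
Qed.
End Signatures.

Ltac decide_comparisons :=
  repeat match goal with
  | |- context [?x < ?y] =>
      first [ rewrite (_ : x < y = true); last by apply/idP; lra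
            | rewrite (_ : x < y = false); last by apply/negbTE; rewrite -leNgt; lra ]
  | |- context [?x <= ?y] =>
      first [ rewrite (_ : x <= y = true); last by apply/idP; lra
            | rewrite (_ : x <= y = false); last by apply/negbTE; rewrite -ltNge; lra ]
  end.

Ltac signatures_by_computation :=
  move=> sigma; rewrite inS_ga_list // /signature_list /sign_patterns;
  decide_comparisons; apply: mem_iff_all; by rewrite /= ?inE ?eqxx /= ?orbT.

Theorem lemma2p4 (R : realType) (a : R) (ha0 : a != 0) (ha1 : a != 1) :
  (a < 2^-1 - beta R ->
     forall sigma, inS (ga a) sigma <->
       sigma \in [:: sg [::]%N; sg [:: 1;2;4;5;7]%N; sg [:: 1;3;4;5]%N;
                     sg [:: 1;3;5;7]%N; sg [:: 2;3;4]%N; sg [:: 4;7]%N]) /\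
  (2^-1 - beta R <= a < 0 ->
     forall sigma, inS (ga a) sigma <->
       sigma \in [:: sg [::]%N; sg [:: 1;2;4;5;7]%N; sg [:: 1;2;5]%N; sg [:: 1;3;4;5]%N;
                     sg [:: 1;3;5;7]%N; sg [:: 2;3;4]%N; sg [:: 2;3;7]%N; sg [:: 4;7]%N]) /\
  (0 < a < 2^-1 ->
     forall sigma, inS (ga a) sigma <->
       sigma \in [:: sg [::]%N; sg [:: 1;2;4;5;7]%N; sg [:: 1;2;5]%N; sg [:: 1;4;6]%N;
                     sg [:: 1;3;4;5]%N; sg [:: 1;3;5;7]%N; sg [:: 2;3;4]%N; sg [:: 2;3;7]%N;
                     sg [:: 3;4;5;6;7]%N; sg [:: 4;7]%N]) /\
  (a = 2^-1 ->
     forall sigma, inS (ga a) sigma <->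
       sigma \in [:: sg [::]%N; sg [:: 1;2;4;5;7]%N; sg [:: 1;2;5]%N; sg [:: 1;3;5;7]%N;
                     sg [:: 1;4;6]%N; sg [:: 2;3;4]%N; sg [:: 2;3;7]%N; sg [:: 3;4;5;6;7]%N]) /\
  (2^-1 < a < 1 ->
     forall sigma, inS (ga a) sigma <->
       sigma \in [:: sg [::]%N; sg [:: 1;2;3;4;6;7]%N; sg [:: 1;2;4;5;7]%N; sg [:: 1;2;5]%N;
                     sg [:: 1;3;5;7]%N; sg [:: 1;4;6]%N; sg [:: 2;3;4]%N; sg [:: 2;3;7]%N;
                     sg [:: 2;4;5;6]%N; sg [:: 3;4;5;6;7]%N]) /\
  (1 < a <= 2^-1 + beta R ->
     forall sigma, inS (ga a) sigma <->
       sigma \in [:: sg [::]%N; sg [:: 1;2;3;4;6;7]%N; sg [:: 1;2;5]%N; sg [:: 1;3;5;7]%N;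
                     sg [:: 1;4;6]%N; sg [:: 2;3;7]%N; sg [:: 2;4;5;6]%N; sg [:: 3;4;5;6;7]%N]) /\
  (2^-1 + beta R < a ->
     forall sigma, inS (ga a) sigma <->
       sigma \in [:: sg [::]%N; sg [:: 1;2;3;4;6;7]%N; sg [:: 1;3;5;7]%N; sg [:: 1;4;6]%N;
                     sg [:: 2;4;5;6]%N; sg [:: 3;4;5;6;7]%N]).
Proof.
have hb := beta_gt_half R.
split; first by move=> r; signatures_by_computation.
split; first by move=> /andP[r1 r2]; signatures_by_computation.
split; first by move=> /andP[r1 r2]; signatures_by_computation.
split; first by move=> r; signatures_by_computation.
split; first by move=> /andP[r1 r2]; signatures_by_computation.
split; first by move=> /andP[r1 r2]; signatures_by_computation.
by move=> r; signatures_by_computation.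
Qed.
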